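(* Let $i,j\in\mathbb{N}=\{0,1,2,\dots\}$ and let $w\in\{0,1\}^*$ be a $\frac{7}{3}$-power-free word with $|w|=(7+2j)2^i-1$. Let $a\in\{0,1\}$. Then the word $waw$ has a subword $x$ with $|x|\leq 7\cdot 2^i$ such that $x$ is a $\beta$-power for some rational $\beta\ge\frac{7}{3}$.
   Context: A word $w'$ is a subword of $w$ if $w=uw'v$ for some words $u,v$. For a rational $\beta\ge 1$, a $\beta$-power is a word of the form $y^ny'$ with $y$ a nonempty word, $y'$ a prefix of $y$, $n$ a nonnegative integer and $n+|y'|/|y|=\beta$. A word is $\alpha$-power-free if none of its subwords is a $\beta$-power for any rational $\beta\geq\alpha$. *)

From mathcomp Require Import all_boot all_order all_algebra.
Set Implicit Arguments. Unset Strict Implicit. Unset Printing Implicit Defensive.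
Import Order.TTheory GRing.Theory Num.Theory.

Definition subword (x w : seq bool) : bool := infix x w.

Definition is_power (x : seq bool) (beta : rat) : Prop :=
  exists (y y' : seq bool) (n : nat),
    [/\ y != [::], prefix y' y,
        x = flatten (nseq n y) ++ y' &
        beta = (n%:R + (size y')%:R / (size y)%:R)%R].

Definition power_free (alpha : rat) (w : seq bool) : Prop :=
  forall (x : seq bool) (beta : rat), subword x w -> (alpha <= beta)%R -> ~ is_power x beta.

(* Let v = w a w.  If v has no factor of length at most 7 that is a
   beta-power with beta >= 7/3, then it contains no cube, no 5/2-power of
   length 5 and no 7/3-power of length 7, and this forces all positions t with
   v_t = v_(t+1) to have the same parity.  If |w| >= 6 is even this is absurd:
   w has such a position, and its two copies in v lie at odd distance |w| + 1.
   If |w| = 2K - 1 is odd, the parity property cuts v, minus its first or its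
   last letter, into blocks 01 and 10, i.e. it exhibits a factor mu (u b u) of
   v with mu u a factor of w, where mu is the Thue-Morse morphism.  Then u is
   7/3-power-free of length K - 1, so by induction on i the word u b u has a
   short 7/3-power x, and mu x is a 7/3-power in v of twice the length. *)

From mathcomp Require Import all_boot all_order all_algebra.
From mathcomp Require Import zify.
From Stdlib Require Import Classical_Prop.

Set Implicit Arguments.
Unset Strict Implicit.
Unset Printing Implicit Defensive.
Import Order.TTheory GRing.Theory Num.Theory.

Definition has_short_power (alpha : rat) (n : nat) (v : seq bool) : Prop :=
  exists (x : seq bool) (beta : rat),
    [/\ subword x v, size x <= n, (alpha <= beta)%R & is_power x beta].

Lemma has_short_power_infix alpha n u v :
  infix u v -> has_short_power alpha n u -> has_short_power alpha n v.
Proof.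
by move=> uv [x [beta [xu ? ? ?]]]; exists x, beta; split; first exact: infix_trans xu uv.
Qed.

Lemma has_short_power_leq alpha m n v :
  m <= n -> has_short_power alpha m v -> has_short_power alpha n v.
Proof.
by move=> mn [x [beta [? xm ? ?]]]; exists x, beta; split; rewrite ?(leq_trans xm mn).
Qed.

Definition mu (s : seq bool) : seq bool := flatten [seq [:: c; ~~ c] | c <- s].

Lemma mu_cat s1 s2 : mu (s1 ++ s2) = mu s1 ++ mu s2.
Proof. by rewrite /mu map_cat flatten_cat. Qed.

Lemma size_mu s : size (mu s) = (size s).*2.
Proof. by elim: s => //= c s IH; rewrite /mu /= in IH *; rewrite IH doubleS. Qed.

Lemma mu_flatten_nseq n y : mu (flatten (nseq n y)) = flatten (nseq n (mu y)).
Proof. by elim: n => //= n IH; rewrite mu_cat IH. Qed.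

Lemma mu_prefix x y : prefix x y -> prefix (mu x) (mu y).
Proof. by move=> /prefixP [s ->]; rewrite mu_cat prefix_prefix. Qed.

Lemma mu_infix x y : infix x y -> infix (mu x) (mu y).
Proof. by move=> /infixP [s [s' ->]]; rewrite !mu_cat infix_infix. Qed.

Lemma is_power_mu x beta : is_power x beta -> is_power (mu x) beta.
Proof.
move=> [y [y' [n [y_nil y'y -> ->]]]]; exists (mu y), (mu y'), n; split.
- by case: (y) y_nil.
- exact: mu_prefix.
- by rewrite mu_cat mu_flatten_nseq.
- by rewrite !size_mu -!muln2 !natrM -mulf_div divff ?mulr1.
Qed.

Lemma power_free_mu_infix alpha u w :
  power_free alpha w -> infix (mu u) w -> power_free alpha u.
Proof.
move=> w_free uw x beta xu le_alpha /is_power_mu; apply: w_free le_alpha.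
exact: infix_trans (mu_infix xu) uw.
Qed.

Lemma has_short_power_mu alpha n u :
  has_short_power alpha n u -> has_short_power alpha n.*2 (mu u).
Proof.
move=> [x [beta [xu xn ? ?]]]; exists (mu x), beta; split => //.
- exact: mu_infix.
- by rewrite size_mu leq_double.
- exact: is_power_mu.
Qed.

Definition doubled (v : seq bool) (t : nat) : bool := nth false v t == nth false v t.+1.

Definition window (v : seq bool) (t L : nat) : seq bool :=
  mkseq (fun k => nth false v (t + k)) L.

Lemma infix_window v t L : t + L <= size v -> infix (window v t L) v.
Proof.
move=> tL; suff -> : window v t L = take L (drop t v).
  exact: infix_trans (infix_take _ _) (infix_drop _ _).
apply: (@eq_from_nth _ false).
  by rewrite size_mkseq size_take size_drop; case: ltnP; lia.
by move=> k; rewrite size_mkseq => kL; rewrite nth_mkseq // nth_take // nth_drop.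
Qed.

Lemma neq_negb (b c : bool) : b != c -> c = ~~ b.
Proof. by case: b; case: c. Qed.

Local Notation seven_thirds := (7%:R / 3%:R : rat)%R.

Lemma ler_nat_ratio (m n p q : nat) : 0 < n -> 0 < q ->
  (m%:R / n%:R <= p%:R / q%:R :> rat)%R = (m * q <= p * n).
Proof.
move=> n0 q0.
by rewrite ler_pdivrMr ?ltr0n // mulrAC ler_pdivlMr ?ltr0n // -!natrM ler_nat.
Qed.

Section ShortPowerFree.

Variable v : seq bool.
Hypothesis v_free : ~ has_short_power seven_thirds 7 v.
Local Notation f := (nth false v).

Lemma window_not_power t L beta : t + L <= size v -> L <= 7 ->
  (seven_thirds <= beta)%R -> ~ is_power (window v t L) beta.
Proof.
move=> tL L7 le_beta pow; apply: v_free; exists (window v t L), beta; split => //.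
- exact: infix_window.
- by rewrite size_mkseq.
Qed.

Lemma doubled_no_cube t : t + 3 <= size v -> doubled v t -> ~~ doubled v t.+1.
Proof.
move=> t3 /eqP e1; apply/negP => /eqP e2.
apply: (@window_not_power t 3 (3%:R / 1%:R)%R t3 isT); first by rewrite ler_nat_ratio.
rewrite /window /mkseq /= addn0 addn1 addn2 -e2 -e1.
by exists [:: f t], [::], 3.
Qed.

Lemma doubled_among_four t : t + 5 <= size v ->
  [|| doubled v t, doubled v t.+1, doubled v t.+2 | doubled v t.+3].
Proof.
move=> t5; apply/negPn/negP; rewrite !negb_or.
move=> /and4P [/neq_negb e1 /neq_negb e2 /neq_negb e3 /neq_negb e4].
apply: (@window_not_power t 5 (5%:R / 2%:R)%R t5 isT); first by rewrite ler_nat_ratio.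
rewrite /window /mkseq /= !addnS addn0 e4 e3 e2 e1 !negbK.
by exists [:: f t; ~~ f t], [:: f t], 2; rewrite /= eqxx.
Qed.

(* Otherwise v_t ... v_(t+6) = b ~b ~b b ~b ~b b. *)
Lemma doubled_no_seven_thirds t : t + 7 <= size v ->
  ~~ doubled v t -> doubled v t.+1 -> ~~ doubled v t.+2 -> ~~ doubled v t.+3 ->
  doubled v t.+4 -> doubled v (t + 5).
Proof.
move=> t7 /neq_negb e1 /eqP e2 /neq_negb e3 /neq_negb e4 /eqP e5.
apply/negPn/negP => /neq_negb; rewrite !addnS addn0 => e6.
apply: (@window_not_power t 7 seven_thirds t7 isT (lexx _)).
rewrite /window /mkseq /= !addnS addn0 e6 -e5 e4 e3 -e2 e1 !negbK.
by exists [:: f t; ~~ f t; ~~ f t], [:: f t], 2; rewrite /= eqxx.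
Qed.

Lemma doubled_gap_even t d : 0 < t -> t + d + 3 <= size v ->
  doubled v t -> doubled v (t + d) -> (forall k, 0 < k < d -> ~~ doubled v (t + k)) ->
  ~~ odd d.
Proof.
case: t => // t _ td dt dtd gap; apply/negP => odd_d.
have [d1 | d_ne1] := eqVneq d 1.
  by move: dtd; rewrite d1 addn1 (negbTE (doubled_no_cube _ dt)) //; lia.
have [d3 | d_ne3] := eqVneq d 3.
  move: dtd (gap 1) (gap 2); rewrite d3 !addnS !addn0 => dt3 /(_ isT) ndt1 /(_ isT) ndt2.
  have ndt0 : ~~ doubled v t by apply: contraL dt; apply: doubled_no_cube; lia.
  have ndt4 : ~~ doubled v (t + 5) by rewrite addnS addn4 (doubled_no_cube _ dt3) //; lia.
  by rewrite (doubled_no_seven_thirds _ ndt0 dt ndt1 ndt2 dt3) in ndt4; lia.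
have d5 : 4 < d by move: odd_d d_ne1 d_ne3; case: (d) => [|[|[|[|[|]]]]].
have ndt k : 0 < k < 5 -> ~~ doubled v (t.+1 + k).
  by move=> /andP [k0 k5]; apply: gap; lia.
have := @doubled_among_four t.+2 ltac:(lia).
move: (ndt 1 isT) (ndt 2 isT) (ndt 3 isT) (ndt 4 isT).
by rewrite !addSn !addnS addn0 => /negbTE-> /negbTE-> /negbTE-> /negbTE->.
Qed.

Lemma doubled_dist_even d t : 0 < t -> t + d + 3 <= size v ->
  doubled v t -> doubled v (t + d) -> ~~ odd d.
Proof.
elim/ltn_ind: d t => d IH t t0 td dt dtd; apply/negP => odd_d.
have gap k : 0 < k < d -> ~~ doubled v (t + k).
  move=> /andP [k0 kd]; apply/negP => dtk.
  have even_k := IH k kd t t0 ltac:(lia) dt dtk.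
  have dtd' : doubled v (t + k + (d - k)) by rewrite -addnA subnKC // ltnW.
  have even_dk := IH (d - k) ltac:(lia) (t + k) ltac:(lia) ltac:(lia) dtk dtd'.
  by move: even_dk; rewrite oddB ?(ltnW kd) // odd_d (negbTE even_k).
by rewrite (negbTE (doubled_gap_even t0 td dt dtd gap)) in odd_d.
Qed.

Lemma doubled_parity s t : 0 < s <= t -> t + 3 <= size v ->
  doubled v s -> doubled v t -> odd s = odd t.
Proof.
move=> /andP [s0 st] t3 ds dt.
have := @doubled_dist_even (t - s) s s0; rewrite subnKC // => /(_ t3 ds dt).
by rewrite oddB //; case: (odd s); case: (odd t).
Qed.

End ShortPowerFree.

Lemma doubled_catl s1 s2 t : t.+1 < size s1 -> doubled (s1 ++ s2) t = doubled s1 t.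
Proof. by move=> t1; rewrite /doubled !nth_cat t1 (ltnW t1). Qed.

Lemma doubled_catr s1 s2 t : doubled (s1 ++ s2) (size s1 + t) = doubled s2 t.
Proof. by rewrite /doubled -addnS !nth_cat !ltnNge !leq_addr /= !addKn. Qed.

Lemma doubled_behead s t : doubled (behead s) t = doubled s t.+1.
Proof. by rewrite /doubled !nth_behead. Qed.

Lemma doubled_take n s t : t.+1 < n -> doubled (take n s) t = doubled s t.
Proof. by move=> tn; rewrite /doubled !nth_take // ltnW. Qed.

Lemma doubled_square w a t :
  t.+1 < size w -> doubled (w ++ a :: w) (size w + t.+1) = doubled (w ++ a :: w) t.
Proof. by move=> tw; rewrite doubled_catr doubled_catl. Qed.

Definition paired (s : seq bool) : Prop :=
  forall k, k.*2.+1 < size s -> ~~ doubled s k.*2.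

Lemma paired_catl s1 s2 : paired (s1 ++ s2) -> paired s1.
Proof.
by move=> p12 k k1; rewrite -(doubled_catl s2 k1) p12 // size_cat ltn_addr.
Qed.

Lemma paired_mid s1 c c' s2 :
  ~~ odd (size s1) -> paired (s1 ++ c :: c' :: s2) -> c' = ~~ c.
Proof.
move=> even_s1 /(_ (size s1)./2); rewrite even_halfK // -[size s1]addn0 doubled_catr.
by rewrite size_cat /= => /(_ ltac:(lia)) /neq_negb.
Qed.

Lemma paired_mu s : ~~ odd (size s) -> paired s -> exists u, s = mu u.
Proof.
have [n] := ubnP (size s); elim: n s => // n IH [|c [|c' s]] //= sn; first by exists [::].
rewrite negbK => even_s ps.
have ps' : paired s.
  move=> k k1; rewrite -(doubled_catr [:: c; c']); apply: (ps k.+1).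
  by rewrite /= doubleS; lia.
have [|u ->] := IH s _ even_s ps'; first lia.
by exists (c :: u); rewrite (@paired_mid [::] _ _ _ isT ps).
Qed.

Section SquareWord.

Variables (w : seq bool) (a : bool).
Local Notation v := (w ++ a :: w).
Hypothesis v_free : ~ has_short_power seven_thirds 7 v.

Lemma size_square : size v = (size w).*2.+1.
Proof. by rewrite size_cat /= addnS addnn. Qed.

Lemma square_free_odd : 5 < size w -> odd (size w).
Proof.
move=> w_gt5; apply/negPn/negP => even_w.
have clash s t : 0 < s <= size w -> t + 3 <= size w ->
    doubled v s -> doubled v t -> odd s = ~~ odd t.
  move=> s_w t3 ds; rewrite -doubled_square; last lia.
  move=> dt; rewrite (doubled_parity v_free _ _ ds dt) ?oddD ?(negbTE even_w) //.
    lia.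
  by rewrite size_square; lia.
have single t : 0 < t -> t + 3 <= size w -> ~~ doubled v t.
  by move=> t0 t3; apply/negP => dt; move: (clash t t ltac:(lia) t3 dt dt); case: (odd t).
have [nd1 nd2 nd3] : [/\ ~~ doubled v 1, ~~ doubled v 2 & ~~ doubled v 3].
  by split; apply: single; lia.
have := doubled_among_four (t := 0) v_free ltac:(rewrite size_square; lia).
have := doubled_among_four (t := 1) v_free ltac:(rewrite size_square; lia).
rewrite (negbTE nd1) (negbTE nd2) (negbTE nd3) /= orbF => d4 d0.
by move: (clash 4 0 ltac:(lia) ltac:(lia) d4 d0).
Qed.

Section OddSquare.

Hypotheses (odd_w : odd (size w)) (w_gt2 : 2 < size w).

(* The shift by size w + 1 between the two copies of w is even, so it moves the
   end positions 0 and 2 |w| - 1 to interior positions of the same parity. *)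
Lemma doubled_square_interior t : t.+1 < size v ->
  exists t', [/\ 0 < t', t' + 3 <= size v, odd t' = odd t & doubled v t' = doubled v t].
Proof.
rewrite size_square => tv.
have [-> | t_gt0] := posnP t.
  exists (size w + 1); rewrite doubled_square; last lia.
  by split; rewrite // ?oddD ?odd_w //; lia.
have [t_last | t_ne] := eqVneq t (size w + (size w - 2).+1).
  exists (size w - 2); rewrite t_last doubled_square; last lia.
  by split; rewrite // ?oddD ?oddB ?odd_w //; lia.
by exists t; split => //; lia.
Qed.

Lemma doubled_square_parity s t : s.+1 < size v -> t.+1 < size v ->
  doubled v s -> doubled v t -> odd s = odd t.
Proof.
move=> /doubled_square_interior [s' [s'0 s'3 <- <-]].
move=> /doubled_square_interior [t' [t'0 t'3 <- <-]].
have [st | ts] := leqP s' t'; first by apply: (doubled_parity v_free); rewrite ?s'0.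
move=> ds dt; apply/esym; apply: (doubled_parity v_free) dt ds => //.
by rewrite t'0 ltnW.
Qed.

Lemma square_paired : paired (behead v) \/ paired (take (size w).*2 v).
Proof.
have [[t0 [t0v even_t0 dt0]] | no_even] :=
  classic (exists t, [/\ t.+1 < size v, ~~ odd t & doubled v t]).
  left => k; rewrite size_behead doubled_behead => kv; apply/negP => dk.
  have kv' : k.*2.+2 < size v by lia.
  by move: (doubled_square_parity t0v kv' dt0 dk); rewrite (negbTE even_t0) /= odd_double.
right => k; rewrite size_take size_square ltnS leqnn /= => kv; rewrite doubled_take //.
apply/negP => dk; apply: no_even; exists k.*2; split => //; last by rewrite odd_double.
by rewrite size_square; lia.
Qed.

End OddSquare.

End SquareWord.

Lemma has_short_power_square_even w a : 5 < size w -> ~~ odd (size w) ->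
  has_short_power seven_thirds 7 (w ++ a :: w).
Proof.
move=> w_gt5 even_w; apply: NNPP => v_free.
by rewrite (square_free_odd v_free w_gt5) in even_w.
Qed.

Section Doubling.

Variables (K n : nat).
Hypothesis short_power_half : forall u b, power_free seven_thirds u -> size u = K.-1 ->
  has_short_power seven_thirds n (u ++ b :: u).

Lemma has_short_power_paired_window (w v r : seq bool) (c c' : bool) :
  power_free seven_thirds w -> infix r w -> size r = (K.-1).*2 ->
  paired (r ++ c :: c' :: r) -> infix (r ++ c :: c' :: r) v ->
  has_short_power seven_thirds n.*2 v.
Proof.
move=> w_free rw size_r pz; have even_r : ~~ odd (size r) by rewrite size_r odd_double.
have [u ru] := paired_mu even_r (paired_catl pz).
rewrite (paired_mid even_r pz) => /has_short_power_infix; apply.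
have -> : r ++ c :: ~~ c :: r = mu (u ++ c :: u) by rewrite mu_cat ru.
apply/has_short_power_mu/short_power_half.
  by apply: power_free_mu_infix w_free _; rewrite -ru.
by apply/double_inj; rewrite -size_mu -ru.
Qed.

Lemma has_short_power_square_double w a : 1 < K -> 7 <= n.*2 ->
  power_free seven_thirds w -> size w = (K.*2).-1 ->
  has_short_power seven_thirds n.*2 (w ++ a :: w).
Proof.
move=> K_gt1 n7 w_free size_w.
have [short | v_free] := classic (has_short_power seven_thirds 7 (w ++ a :: w)).
  exact: has_short_power_leq short.
have odd_w : odd (size w) by rewrite size_w -(prednK (ltnW K_gt1)) doubleS /= odd_double.
have [] := square_paired v_free odd_w ltac:(lia).
  case: w size_w w_free {odd_w v_free} => [|w0 r] /= size_w w_free pz; first lia.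
  apply: (has_short_power_paired_window w_free (infix_cons _ _) _ pz); first lia.
  exact: infix_cons.
case/lastP: w size_w w_free {odd_w v_free} => [|r c]; rewrite ?size_rcons /=.
  by move=> size_w; lia.
move=> size_w w_free.
have -> : rcons r c ++ a :: rcons r c = (r ++ c :: a :: r) ++ [:: c].
  by rewrite -!cats1 -!catA.
rewrite take_size_cat; last by rewrite size_cat /=; lia.
move=> pz; apply: (has_short_power_paired_window w_free _ _ pz).
- by rewrite -cats1 prefix_infix.
- lia.
- exact: prefix_infix.
Qed.

End Doubling.

Theorem lemma5 (i j : nat) (w : seq bool) (a : bool) :
  power_free (7%:R / 3%:R)%R w ->
  size w = ((7 + 2 * j) * 2 ^ i).-1 ->
  exists (x : seq bool) (beta : rat),
    [/\ subword x (w ++ a :: w), size x <= 7 * 2 ^ i,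
        (7%:R / 3%:R <= beta)%R & is_power x beta].
Proof.
change (power_free seven_thirds w -> size w = ((7 + 2 * j) * 2 ^ i).-1 ->
  has_short_power seven_thirds (7 * 2 ^ i) (w ++ a :: w)).
elim: i w a => [|i IH] w a w_free size_w.
  rewrite expn0 muln1 in size_w *.
  by apply: has_short_power_square_even; rewrite size_w; lia.
have pow_gt0 : 0 < 2 ^ i by rewrite expn_gt0.
rewrite expnS in size_w *; have -> : 7 * (2 * 2 ^ i) = (7 * 2 ^ i).*2 by lia.
apply: (has_short_power_square_double IH a _ _ w_free); lia.
Qed.
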